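(* Let $c_i:=c_i(\alpha,\beta,0)\in\mathbb{Q}[\alpha,\beta]$. Then for every integer $n$, $$(n+2)c_{n+2}+(n+1-r)\alpha c_{n+1}+(n+1-2r)\frac{\alpha^2-\beta}{4}c_n=0.$$
   Context: Fix an integer $r\ge1$ and indeterminates $\alpha,\beta,\gamma$. Define polynomials $c_n=c_n(\alpha,\beta,\gamma)\in\mathbb{Q}[\alpha,\beta,\gamma]$ by $c_n=0$ for $n<0$, $c_0=1$, and for every integer $n\ge-3$, $$(n+4)c_{n+4}+(2n+6-r)\alpha c_{n+3}+\left[(n+2-r)\alpha^2+(2n+5-2r)\frac{\alpha^2-\beta}{4}\right]c_{n+2}+\left[(2n+3-3r)\alpha\frac{\alpha^2-\beta}{4}+\frac{\gamma}{2}\right]c_{n+1}+\frac{1}{16}(\alpha^2-\beta)^2(n+1-2r)c_n=0.$$ $c_n(\alpha,\beta,0)$ denotes $c_n$ with $\gamma$ set to $0$. *)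

From mathcomp Require Import all_boot all_algebra.
From mathcomp Require Import mpoly.
Set Implicit Arguments. Unset Strict Implicit. Unset Printing Implicit Defensive.
Import GRing.Theory.
Local Open Scope ring_scope.

Definition P3 := {mpoly rat[3]}.
Definition alpha : P3 := 'X_(0 : 'I_3).
Definition beta  : P3 := 'X_(1 : 'I_3).
Definition gamma : P3 := 'X_(2 : 'I_3).

Definition ic (z : int) : P3 := (z%:~R : rat)%:MP.

Definition gamma0 (p : P3) : P3 :=
  comp_mpoly [tuple alpha; beta; 0] p.

Definition crec (r : nat) (c : int -> P3) (n : int) : Prop :=
  ic (n + 4) * c (n + 4)
  + ic (2 * n + 6 - r%:Z) * alpha * c (n + 3)
  + (ic (n + 2 - r%:Z) * alpha ^+ 2
     + ic (2 * n + 5 - 2 * r%:Z) * ((4^-1 : rat)%:MP * (alpha ^+ 2 - beta))) * c (n + 2)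
  + (ic (2 * n + 3 - 3 * r%:Z) * alpha * ((4^-1 : rat)%:MP * (alpha ^+ 2 - beta))
     + (2^-1 : rat)%:MP * gamma) * c (n + 1)
  + (16^-1 : rat)%:MP * (alpha ^+ 2 - beta) ^+ 2 * ic (n + 1 - 2 * r%:Z) * c n
  = 0.

(* c is the sequence c_n of the paper: c_n = 0 for n < 0, c_0 = 1,
   and the recurrence holds for n >= -3 (this determines c uniquely) *)
Definition is_cseq (r : nat) (c : int -> P3) : Prop :=
  (forall n : int, n < 0 -> c n = 0) /\ c 0 = 1 /\
  (forall n : int, -3 <= n -> crec r c n).

(* Setting gamma = 0, the fourth-order recurrence for c_n factors as
   (S^2 + alpha S + q) L, where S is the shift n -> n + 1, q = (alpha^2 - beta)/4
   and L_n is the second-order expression of the proposition.  Since c_n = 0 for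
   n < 0, L_n vanishes for n <= -2 (at n = -2 the only surviving term has
   coefficient n + 2 = 0), and the factored recurrence propagates L_n = 0 to every
   n. *)

From HB Require Import structures.
From mathcomp Require Import all_boot all_algebra.
From mathcomp Require Import mpoly.
From mathcomp Require Import ring zify.
Set Implicit Arguments. Unset Strict Implicit. Unset Printing Implicit Defensive.
Import GRing.Theory Num.Theory.
Local Open Scope ring_scope.

Section SecondOrderFactor.
Variables (R : comRingType) (r : int) (a q : R).

Definition rec2 (e : int -> R) (n : int) : R :=
  (n + 2)%:~R * e (n + 2) + (n + 1 - r)%:~R * a * e (n + 1)
  + (n + 1 - 2 * r)%:~R * q * e n.

Lemma rec2_factor (e : int -> R) (n : int) :
  rec2 e (n + 2) + a * rec2 e (n + 1) + q * rec2 e n =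
  (n + 4)%:~R * e (n + 4) + (2 * n + 6 - r)%:~R * a * e (n + 3)
  + ((n + 2 - r)%:~R * a ^+ 2 + (2 * n + 5 - 2 * r)%:~R * q) * e (n + 2)
  + (2 * n + 3 - 3 * r)%:~R * a * q * e (n + 1)
  + q ^+ 2 * (n + 1 - 2 * r)%:~R * e n.
Proof. by rewrite /rec2 -!addrA; ring. Qed.

End SecondOrderFactor.

Lemma order2_rec_eq0 (R : pzRingType) (a b : R) (L : int -> R) (m : int) :
  (forall n, m <= n -> L (n + 2) + a * L (n + 1) + b * L n = 0) ->
  L m = 0 -> L (m + 1) = 0 -> forall n, m <= n -> L n = 0.
Proof.
move=> rec Lm Lm1.
have step k : L (m + k%:Z) = 0 /\ L (m + k%:Z + 1) = 0.
  elim: k => [|k [IH0 IH1]]; first by rewrite addr0.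
  have -> : m + k.+1%:Z = m + k%:Z + 1 by lia.
  have -> : m + k%:Z + 1 + 1 = m + k%:Z + 2 by rewrite -addrA.
  split=> //; have := rec (m + k%:Z); rewrite IH0 IH1 !mulr0 !addr0; apply; lia.
move=> n mn; have -> : n = m + (absz (n - m))%:Z by lia.
by case: (step (absz (n - m))).
Qed.

Definition quarter_disc : P3 := (4^-1 : rat)%:MP * (alpha ^+ 2 - beta).

Definition crec2 (r : nat) (c : int -> P3) : int -> P3 :=
  rec2 r%:Z alpha quarter_disc (fun n => gamma0 (c n)).

Lemma quarter_disc_sqr :
  (16^-1 : rat)%:MP * (alpha ^+ 2 - beta) ^+ 2 = quarter_disc ^+ 2.
Proof. by rewrite exprMn -rmorphXn. Qed.

Lemma ic_intr (z : int) : ic z = z%:~R.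
Proof. by rewrite /ic rmorph_int. Qed.

HB.instance Definition _ := GRing.isAdditive.Build P3 P3 gamma0
  (comp_mpoly_is_additive _).
HB.instance Definition _ := GRing.isMultiplicative.Build P3 P3 gamma0
  (comp_mpoly_is_multiplicative _).

Lemma gamma0_C (x : rat) : gamma0 x%:MP = x%:MP.
Proof. exact: comp_mpolyC. Qed.

Lemma gamma0_alpha : gamma0 alpha = alpha.
Proof. by rewrite /gamma0 /alpha comp_mpolyXU. Qed.

Lemma gamma0_beta : gamma0 beta = beta.
Proof. by rewrite /gamma0 /beta comp_mpolyXU. Qed.

Lemma gamma0_gamma : gamma0 gamma = 0.
Proof. by rewrite /gamma0 /gamma comp_mpolyXU. Qed.

Lemma gamma0_crec (r : nat) (c : int -> P3) (n : int) : crec r c n ->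
  crec2 r c (n + 2) + alpha * crec2 r c (n + 1) + quarter_disc * crec2 r c n = 0.
Proof.
move=> /(congr1 gamma0).
rewrite !ic_intr !(rmorphD, rmorphN, rmorphM, rmorphXn, rmorph_int, rmorph0) /=.
rewrite !gamma0_C gamma0_alpha gamma0_beta gamma0_gamma quarter_disc_sqr -/quarter_disc.
by move=> <-; rewrite /crec2 rec2_factor; ring.
Qed.
Lemma crec2_nonpos (r : nat) (c : int -> P3) :
  (forall n, n < 0 -> c n = 0) -> forall n, n <= -2 -> crec2 r c n = 0.
Proof.
move=> cneg n n_le.
have d0 k : k < 0 -> gamma0 (c k) = 0 by move=> /cneg ->; rewrite rmorph0.
rewrite /crec2 /rec2 (d0 n) ?(d0 (n + 1)) ?mulr0 ?addr0; try lia.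
have [n2_lt|n2_ge] := ltrP (n + 2) 0; first by rewrite d0 ?mulr0.
by rewrite (_ : n + 2 = 0) ?mul0r //; lia.
Qed.

Theorem proposition3p4 (r : nat) (c : int -> P3) :
  (1 <= r)%N -> is_cseq r c ->
  forall n : int,
    ic (n + 2) * gamma0 (c (n + 2))
    + ic (n + 1 - r%:Z) * alpha * gamma0 (c (n + 1))
    + ic (n + 1 - 2 * r%:Z) * ((4^-1 : rat)%:MP * (alpha ^+ 2 - beta)) * gamma0 (c n)
    = 0.
Proof.
move=> _ [cneg [_ crc]] n.
rewrite !ic_intr; change (crec2 r c n = 0).
have [n_le|n_gt] := lerP n (-2); first exact: crec2_nonpos.
apply: (@order2_rec_eq0 _ alpha quarter_disc _ (-3)).
- by move=> k /crc /gamma0_crec.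
- exact: crec2_nonpos.
- exact: crec2_nonpos.
- lia.
Qed.
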